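(* Let $\Gamma(t)=\lim_{n\to\infty}\frac1n\log\mathbb{E}(e^{tH_n})$ and $p^*=\frac{a_0}{1-\sum_{i=1}^\infty a_i}$. Then: (1) for $t\ge0$, $$\log\big(1+(e^t-1)p^*\big)\le\Gamma(t)\le\log\Big(1+(e^t-1)\sum_{i=0}^\infty a_i\Big);$$ (2) for $t<0$, $$\max\Big\{\log\big(1+(e^t-1)p^*\big),\ \log(1-a_0)\Big\}\le\Gamma(t)\le\log\big(1+(e^t-1)a_0\big).$$
   Context: Standing setup (discrete-time Hawkes process, DTHP). Let $(a_i)_{i=0}^\infty$ be a sequence of strictly positive real numbers with $\sum_{i=0}^\infty a_i<1$ and $\sum_{i=1}^\infty i\,a_i<\infty$. The arrival process $\{\xi_n\}_{n\ge1}$ is a sequence of $\{0,1\}$-valued random variables on a probability space $(\Omega,\mathcal F,\mathbb P)$ with $\mathbb{P}(\xi_1=1)=a_0$, $\mathbb P(\xi_1=0)=1-a_0$, and for $n\ge2$, $$\mathbb{P}(\xi_n=1\mid \xi_1,\dots,\xi_{n-1})=a_0+\sum_{i=1}^{n-1}a_{n-i}\xi_i,\qquad \mathbb{P}(\xi_n=0\mid \xi_1,\dots,\xi_{n-1})=1-\Big(a_0+\sum_{i=1}^{n-1}a_{n-i}\xi_i\Big).$$ The DTHP is $H_n=\sum_{i=1}^n\xi_i$, and $\mathcal F_n=\sigma(\xi_1,\dots,\xi_n)$. The limit $\Gamma(t)$ exists for every $t$. One may use that $\xi_1,\dots,\xi_n$ are associated random variables for each $n$ (a fact known from the literature). *)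

From Stdlib Require Import Reals List Arith.
From Coquelicot Require Import Coquelicot.
Import ListNotations.
Open Scope R_scope.

Fixpoint bool_lists (n : nat) : list (list bool) :=
  match n with
  | O => [ [] ]
  | S m => flat_map (fun l => [l ++ [false]; l ++ [true]]) (bool_lists m)
  end.

Definition ind (b : bool) : R := if b then 1 else 0.

(* x_i for 1 <= i, read from the list xs = [x_1; ...; x_n]. *)
Definition xi (xs : list bool) (i : nat) : bool := nth (i - 1) xs false.

(* Conditional intensity of the DTHP at time k given x_1..x_{k-1}:
   a_0 + sum_{i=1}^{k-1} a_{k-i} x_i. *)
Definition intensity (a : nat -> R) (xs : list bool) (k : nat) : R :=
  a 0%nat + fold_right Rplus 0
    (map (fun i => a (k - i)%nat * ind (xi xs i)) (seq 1 (k - 1))).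

(* Joint law of (xi_1, ..., xi_n) of the DTHP:
   P(xi_1 = x_1, ..., xi_n = x_n)
     = prod_{k=1}^n P(xi_k = x_k | xi_1 = x_1, ..., xi_{k-1} = x_{k-1}). *)
Definition dthp_pmf (a : nat -> R) (xs : list bool) : R :=
  fold_right Rmult 1
    (map (fun k => if xi xs k then intensity a xs k else 1 - intensity a xs k)
         (seq 1 (length xs))).

Definition Hval (xs : list bool) : R := INR (length (filter (fun b => b) xs)).

Definition dthp_mgf (a : nat -> R) (t : R) (n : nat) : R :=
  fold_right Rplus 0
    (map (fun xs => dthp_pmf a xs * exp (t * Hval xs)) (bool_lists n)).

Definition pstar (a : nat -> R) : R := a 0%nat / (1 - (Series a - a 0%nat)).

From Pilot Require Import Defs.
From Stdlib Require Import Reals List Arith Lia Lra Psatz.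
From Coquelicot Require Import Coquelicot.
Import ListNotations.
Open Scope R_scope.

(* Conditioning on the first n coordinates, M_n = E(e^(t H_n)) satisfies
   M_(n+1) = E(e^(t H_n) (1 + (e^t - 1) l_(n+1))), where the intensity l_(n+1) lies between
   a_0 and sum_i a_i; bounding it pointwise gives the upper bounds.  For the lower bounds,
   e^(t H_n) and l_(n+1) are both increasing (t >= 0) or both decreasing (t < 0) functions of
   the path, so by the Harris inequality M_(n+1) >= M_n (1 + (e^t - 1) p_n), where
   p_n = P(xi_(n+1) = 1).  The renewal equation p_n = a_0 + sum_(j=1)^n a_j p_(n-j) shows that
   p_n increases to p^*, and a Cesaro argument turns the product bound into
   Gamma(t) >= log(1 + p^* (e^t - 1)).  Finally M_n >= P(H_n = 0) = (1 - a_0)^n. *)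

Local Notation lsum f l := (fold_right Rplus 0 (map f l)).

Lemma fold_Rplus_init (l : list R) c : fold_right Rplus c l = fold_right Rplus 0 l + c.
Proof. induction l as [|x l IH]; simpl; [lra | rewrite IH; ring]. Qed.

Lemma fold_Rmult_init (l : list R) c : fold_right Rmult c l = fold_right Rmult 1 l * c.
Proof. induction l as [|x l IH]; simpl; [lra | rewrite IH; ring]. Qed.

Lemma lsum_app {A} (f : A -> R) l1 l2 : lsum f (l1 ++ l2) = lsum f l1 + lsum f l2.
Proof. rewrite map_app, fold_right_app, fold_Rplus_init; ring. Qed.

Lemma lsum_ext_in {A} (f g : A -> R) l : (forall x, In x l -> f x = g x) -> lsum f l = lsum g l.
Proof. intros H; now rewrite (map_ext_in _ _ _ H). Qed.

Lemma lsum_le {A} (f g : A -> R) l : (forall x, In x l -> f x <= g x) -> lsum f l <= lsum g l.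
Proof.
  induction l as [|x l IH]; simpl; intros H; [lra|].
  apply Rplus_le_compat; auto.
Qed.

Lemma lsum_add {A} (f g : A -> R) l : lsum (fun x => f x + g x) l = lsum f l + lsum g l.
Proof. induction l as [|x l IH]; simpl; [lra | rewrite IH; ring]. Qed.

Lemma lsum_scal {A} (f : A -> R) c l : lsum (fun x => c * f x) l = c * lsum f l.
Proof. induction l as [|x l IH]; simpl; [lra | rewrite IH; ring]. Qed.

Lemma lsum_flat_map {A B} (h : B -> R) (g : A -> list B) l :
  lsum h (flat_map g l) = lsum (fun x => lsum h (g x)) l.
Proof. induction l as [|x l IH]; simpl; auto. rewrite lsum_app, IH; auto. Qed.

Lemma lsum_ge0 {A} (f : A -> R) l : (forall x, In x l -> 0 <= f x) -> 0 <= lsum f l.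
Proof.
  induction l as [|x l IH]; simpl; intros H; [lra|].
  apply Rplus_le_le_0_compat; auto.
Qed.

Lemma fold_Rmult_map_ge0 {A} (f : A -> R) l : (forall x, In x l -> 0 <= f x) ->
  0 <= fold_right Rmult 1 (map f l).
Proof. induction l as [|x l IH]; simpl; intros H; [lra | apply Rmult_le_pos; auto]. Qed.

Definition sum1 (f : nat -> R) (n : nat) : R := lsum f (seq 1 n).

Lemma sum1_S f n : sum1 f (S n) = sum1 f n + f (S n).
Proof. unfold sum1. rewrite seq_S, lsum_app. simpl. ring. Qed.

Lemma sum1_Sl f n : sum1 f (S n) = f 1%nat + sum1 (fun i => f (S i)) n.
Proof. unfold sum1. simpl. f_equal. rewrite <- seq_shift, map_map. auto. Qed.

Lemma sum1_rev f n : sum1 (fun i => f (S n - i)%nat) n = sum1 f n.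
Proof.
  revert f; induction n as [|n IH]; intros f; [reflexivity|].
  rewrite sum1_Sl, sum1_S, Rplus_comm. replace (S (S n) - 1)%nat with (S n) by lia.
  f_equal. rewrite <- (IH f). reflexivity.
Qed.

Lemma sum1_le f g n : (forall j, (1 <= j <= n)%nat -> f j <= g j) -> sum1 f n <= sum1 g n.
Proof. intros H. apply lsum_le. intros j Hj. apply in_seq in Hj. apply H; lia. Qed.

Lemma sum1_scal_r f c n : sum1 (fun j => f j * c) n = sum1 f n * c.
Proof.
  unfold sum1. rewrite (lsum_ext_in _ (fun j => c * f j)), lsum_scal by (intros; ring). ring.
Qed.

Lemma sum1_le_add f J n : (forall j, 0 <= f j) -> sum1 f J <= sum1 f (J + n).
Proof.
  intros H. induction n as [|n IH]; [rewrite Nat.add_0_r; lra|].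
  rewrite Nat.add_succ_r, sum1_S. specialize (H (S (J + n))). lra.
Qed.

Lemma sum_n_sum1 f n : sum_n f n = f 0%nat + sum1 f n.
Proof.
  induction n as [|n IH].
  - rewrite sum_O. unfold sum1; simpl. lra.
  - rewrite sum_Sn, IH, sum1_S. unfold plus; simpl. lra.
Qed.

Lemma exp_le x y : x <= y -> exp x <= exp y.
Proof. intros [H|<-]; [left; apply exp_increasing, H | lra]. Qed.

Lemma mix_exp_pos t p : 0 <= p <= 1 -> 0 < 1 + (exp t - 1) * p.
Proof. intros Hp. pose proof (exp_pos t). nra. Qed.

Lemma inv_INR_mul_ln_pow n x : 0 < x -> / INR (S n) * ln (x ^ S n) = ln x.
Proof.
  intros Hx. rewrite ln_pow by exact Hx. field. apply not_0_INR. discriminate.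
Qed.

Lemma ln_le_growth_of_pow_le (M : nat -> R) (q G : R) : 0 < q -> (forall n, q ^ n <= M n) ->
  is_lim_seq (fun n => / INR n * ln (M n)) G -> ln q <= G.
Proof.
  intros Hq HM HG. apply is_lim_seq_incr_1 in HG.
  refine (is_lim_seq_le _ _ (ln q) G _ (is_lim_seq_const _) HG).
  intros n. rewrite <- (inv_INR_mul_ln_pow n q Hq). apply Rmult_le_compat_l.
  - left; apply Rinv_0_lt_compat, lt_0_INR; lia.
  - apply ln_le; [apply pow_lt, Hq | apply HM].
Qed.

Lemma growth_le_ln_of_le_pow (M : nat -> R) (B G : R) : 0 < B -> (forall n, 0 < M n) ->
  (forall n, M n <= B ^ n) -> is_lim_seq (fun n => / INR n * ln (M n)) G -> G <= ln B.
Proof.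
  intros HB HMpos HM HG. apply is_lim_seq_incr_1 in HG.
  refine (is_lim_seq_le _ _ G (ln B) _ HG (is_lim_seq_const _)).
  intros n. rewrite <- (inv_INR_mul_ln_pow n B HB). apply Rmult_le_compat_l.
  - left; apply Rinv_0_lt_compat, lt_0_INR; lia.
  - apply ln_le; [apply HMpos | apply HM].
Qed.

(* [ln M_n] dominates the partial sums of [ln q_k], whose Cesaro means tend to [ln l]. *)
Lemma ln_le_growth_of_ratio (M q : nat -> R) (l G : R) : M 0%nat = 1 -> (forall n, 0 < q n) ->
  (forall n, M n * q n <= M (S n)) -> 0 < l -> is_lim_seq q l ->
  is_lim_seq (fun n => / INR n * ln (M n)) G -> ln l <= G.
Proof.
  intros HM0 Hq HMq Hl Hql HG.
  assert (HMpos : forall n, 0 < M n).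
  { induction n as [|n IH]; [lra|]. pose proof (Rmult_lt_0_compat _ _ IH (Hq n)). pose proof (HMq n). lra. }
  assert (Hsum : forall n, sum_f_R0 (fun k => ln (q k)) n <= ln (M (S n))).
  { induction n as [|n IH]; simpl.
    - apply ln_le; [apply Hq|]. pose proof (HMq 0%nat). rewrite HM0, Rmult_1_l in H. exact H.
    - apply Rle_trans with (ln (M (S n) * q (S n))); [|apply ln_le; auto using Rmult_lt_0_compat].
      rewrite ln_mult by auto. lra. }
  assert (Hces : is_lim_seq (fun n => sum_f_R0 (fun k => ln (q k)) (pred n) / INR n) (ln l)).
  { apply is_lim_seq_Reals, Cesaro_1, is_lim_seq_Reals.
    apply is_lim_seq_continuous; [apply continuity_pt_filterlim, continuous_ln, Hl | exact Hql]. }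
  apply is_lim_seq_incr_1 in Hces, HG.
  refine (is_lim_seq_le _ _ (ln l) G _ Hces HG).
  intros n. simpl pred. unfold Rdiv. rewrite Rmult_comm. apply Rmult_le_compat_l; [|apply Hsum].
  left; apply Rinv_0_lt_compat, lt_0_INR; lia.
Qed.

Definition dthp_E (a : nat -> R) (n : nat) (F : list bool -> R) : R :=
  lsum (fun xs => dthp_pmf a xs * F xs) (bool_lists n).

Definition next_intensity (a : nat -> R) (n : nat) (xs : list bool) : R :=
  intensity a xs (S n).

Definition cond_next (a : nat -> R) (n : nat) (F : list bool -> R) (xs : list bool) : R :=
  next_intensity a n xs * F (xs ++ [true]) + (1 - next_intensity a n xs) * F (xs ++ [false]).

Lemma length_bool_lists n xs : In xs (bool_lists n) -> length xs = n.
Proof.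
  revert xs; induction n as [|n IH]; simpl; intros xs H.
  - destruct H as [<-|[]]; auto.
  - apply in_flat_map in H. destruct H as [l [Hl H]].
    destruct H as [<-|[<-|[]]]; rewrite length_app, (IH l Hl); simpl; lia.
Qed.

Lemma xi_app xs b i : (i - 1 < length xs)%nat -> xi (xs ++ [b]) i = xi xs i.
Proof. intros H; unfold xi; now rewrite app_nth1. Qed.

Lemma xi_app_last xs b : xi (xs ++ [b]) (S (length xs)) = b.
Proof. unfold xi. replace (S (length xs) - 1)%nat with (length xs) by lia. apply nth_middle. Qed.

Lemma intensity_app a xs b k : (k <= S (length xs))%nat ->
  intensity a (xs ++ [b]) k = intensity a xs k.
Proof.
  intros H; unfold intensity. f_equal. apply lsum_ext_in. intros i Hi. apply in_seq in Hi.
  rewrite xi_app; auto; lia.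
Qed.

Lemma dthp_pmf_app a xs b : dthp_pmf a (xs ++ [b]) =
  dthp_pmf a xs * (if b then next_intensity a (length xs) xs
                   else 1 - next_intensity a (length xs) xs).
Proof.
  unfold dthp_pmf, next_intensity. rewrite length_app, Nat.add_1_r, seq_S, map_app, fold_right_app.
  rewrite fold_Rmult_init. simpl. rewrite xi_app_last, intensity_app by lia. f_equal; [|ring].
  f_equal. apply map_ext_in. intros k Hk. apply in_seq in Hk.
  rewrite xi_app, intensity_app by lia. reflexivity.
Qed.

Lemma dthp_E_S a n F : dthp_E a (S n) F = dthp_E a n (cond_next a n F).
Proof.
  unfold dthp_E. simpl bool_lists. rewrite lsum_flat_map. apply lsum_ext_in. intros l Hl.
  simpl. rewrite !dthp_pmf_app, (length_bool_lists _ _ Hl). unfold cond_next. ring.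
Qed.

Lemma dthp_E_0 a F : dthp_E a 0 F = F [].
Proof. unfold dthp_E, dthp_pmf. simpl. ring. Qed.

Lemma dthp_E_ext a n F G : (forall xs, In xs (bool_lists n) -> F xs = G xs) ->
  dthp_E a n F = dthp_E a n G.
Proof. intros H. apply lsum_ext_in. intros x Hx; rewrite H; auto. Qed.

Lemma dthp_E_add a n F G : dthp_E a n (fun xs => F xs + G xs) = dthp_E a n F + dthp_E a n G.
Proof. unfold dthp_E. rewrite <- lsum_add. apply lsum_ext_in. intros; ring. Qed.

Lemma dthp_E_scal a n c F : dthp_E a n (fun xs => c * F xs) = c * dthp_E a n F.
Proof. unfold dthp_E. rewrite <- lsum_scal. apply lsum_ext_in. intros; ring. Qed.

Lemma dthp_E_const a n c : dthp_E a n (fun _ => c) = c.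
Proof.
  induction n as [|n IH]; [apply dthp_E_0|].
  rewrite dthp_E_S. transitivity (dthp_E a n (fun _ => c)); [|exact IH].
  apply dthp_E_ext. intros; unfold cond_next; ring.
Qed.

Lemma dthp_E_lsum {A} a n (g : A -> list bool -> R) l :
  dthp_E a n (fun xs => lsum (fun i => g i xs) l) = lsum (fun i => dthp_E a n (g i)) l.
Proof. induction l as [|i l IH]; simpl; [apply dthp_E_const | rewrite dthp_E_add, IH; auto]. Qed.

Lemma dthp_E_marginal a m d F : (forall xs b, (m <= length xs)%nat -> F (xs ++ [b]) = F xs) ->
  dthp_E a (m + d) F = dthp_E a m F.
Proof.
  intros H; induction d as [|d IH]; [now rewrite Nat.add_0_r|].
  rewrite Nat.add_succ_r, dthp_E_S, <- IH. apply dthp_E_ext. intros xs Hx.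
  apply length_bool_lists in Hx. unfold cond_next. rewrite !H by lia. ring.
Qed.

Lemma dthp_mgf_0 a t : dthp_mgf a t 0 = 1.
Proof. unfold dthp_mgf, dthp_pmf, Hval; simpl. rewrite Rmult_0_r, exp_0. ring. Qed.

Lemma Hval_app xs b : Hval (xs ++ [b]) = Hval xs + Defs.ind b.
Proof. unfold Hval. rewrite filter_app, length_app, plus_INR. destruct b; simpl; ring. Qed.

Lemma Hval_cons x xs : Hval (x :: xs) = Defs.ind x + Hval xs.
Proof. unfold Hval. destruct x; cbn [filter length]; [rewrite S_INR|]; simpl; ring. Qed.

Lemma dthp_mgf_S a t n : dthp_mgf a t (S n) =
  dthp_E a n (fun xs => exp (t * Hval xs) * (1 + (exp t - 1) * next_intensity a n xs)).
Proof.
  change (dthp_mgf a t (S n)) with (dthp_E a (S n) (fun xs => exp (t * Hval xs))).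
  rewrite dthp_E_S. apply dthp_E_ext. intros xs _. unfold cond_next. rewrite !Hval_app. simpl.
  rewrite Rplus_0_r, Rmult_plus_distr_l, Rmult_1_r, exp_plus. ring.
Qed.

(* [arrival_prob a n] is [P(xi_(n+1) = 1)]. *)
Definition arrival_prob (a : nat -> R) (n : nat) : R := dthp_E a n (next_intensity a n).

Lemma dthp_E_affine_intensity a n c :
  dthp_E a n (fun xs => 1 + c * next_intensity a n xs) = 1 + c * arrival_prob a n.
Proof. rewrite dthp_E_add, dthp_E_const, dthp_E_scal. reflexivity. Qed.

Lemma dthp_E_ind_xi a n i : (1 <= i <= n)%nat ->
  dthp_E a n (fun xs => Defs.ind (xi xs i)) = arrival_prob a (i - 1).
Proof.
  intros Hi. replace n with (i + (n - i))%nat by lia.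
  rewrite dthp_E_marginal by (intros xs b H; rewrite xi_app; auto; lia).
  destruct i as [|i]; [lia|]. rewrite dthp_E_S. replace (S i - 1)%nat with i by lia.
  apply dthp_E_ext. intros xs Hx. apply length_bool_lists in Hx.
  unfold cond_next. rewrite <- Hx, !xi_app_last. simpl. ring.
Qed.

Lemma arrival_prob_renewal a n :
  arrival_prob a n = a 0%nat + sum1 (fun j => a j * arrival_prob a (n - j)) n.
Proof.
  unfold arrival_prob at 1, next_intensity, intensity.
  rewrite dthp_E_add, dthp_E_const. f_equal.
  rewrite (dthp_E_lsum a n (fun i xs => a (S n - i)%nat * Defs.ind (xi xs i))).
  replace (S n - 1)%nat with n by lia.
  rewrite <- (sum1_rev (fun j => a j * arrival_prob a (n - j))). apply lsum_ext_in.
  intros i Hi. apply in_seq in Hi. rewrite dthp_E_scal, dthp_E_ind_xi by lia.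
  do 2 f_equal. lia.
Qed.

Lemma nth_all_false xs j : forallb negb xs = true -> nth j xs false = false.
Proof.
  revert j; induction xs as [|[] xs IH]; intros [|j] H; simpl in *; auto; discriminate.
Qed.

Lemma intensity_all_false a xs k : forallb negb xs = true -> intensity a xs k = a 0%nat.
Proof.
  intros H. unfold intensity, xi.
  rewrite (lsum_ext_in _ (fun i => 0 * 0)), lsum_scal; [ring|].
  intros i _. rewrite nth_all_false by exact H. simpl; ring.
Qed.

Lemma dthp_E_all_false a n :
  dthp_E a n (fun xs => if forallb negb xs then 1 else 0) = (1 - a 0%nat) ^ n.
Proof.
  induction n as [|n IH]; [rewrite dthp_E_0; simpl; ring|].
  rewrite dthp_E_S. simpl pow. rewrite <- IH, <- dthp_E_scal. apply dthp_E_ext. intros xs _.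
  unfold cond_next. rewrite !forallb_app. simpl. rewrite Bool.andb_false_r, Bool.andb_true_r.
  destruct (forallb negb xs) eqn:Hx; [|ring].
  unfold next_intensity. rewrite intensity_all_false; auto. ring.
Qed.

Lemma Hval_all_false xs : forallb negb xs = true -> Hval xs = 0.
Proof.
  induction xs as [|[] xs IH]; intros H; [reflexivity | discriminate |].
  rewrite Hval_cons, IH; auto. simpl; ring.
Qed.

Definition le_bools (xs ys : list bool) : Prop :=
  Forall2 (fun x y => x = true -> y = true) xs ys.

Definition increasing (f : list bool -> R) : Prop :=
  forall xs ys, le_bools xs ys -> f xs <= f ys.

Lemma le_bools_refl xs : le_bools xs xs.
Proof. induction xs; constructor; auto. Qed.

Lemma le_bools_app xs ys b c : le_bools xs ys -> (b = true -> c = true) ->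
  le_bools (xs ++ [b]) (ys ++ [c]).
Proof. intros H Hb. apply Forall2_app; auto. Qed.

Lemma le_bools_nth xs ys j : le_bools xs ys -> nth j xs false = true -> nth j ys false = true.
Proof. intros H; revert j; induction H; intros j; destruct j; simpl; auto. Qed.

Lemma Hval_increasing xs ys : le_bools xs ys -> Hval xs <= Hval ys.
Proof.
  intros H; induction H as [|x y xs ys Hxy _ IH]; [lra|]. rewrite !Hval_cons.
  destruct x, y; simpl in *; lra.
Qed.

Section Kernel.

Variable a : nat -> R.
Hypothesis a_ge0 : forall i, 0 <= a i.
Hypothesis a_summable : ex_series a.
Hypothesis Series_lt1 : Series a < 1.

Lemma sum_n_le_Series n : sum_n a n <= Series a.
Proof.
  apply (is_lim_seq_incr_compare _ _ (Series_correct a a_summable)). intros m.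
  rewrite sum_Sn. unfold plus; simpl. pose proof (a_ge0 (S m)). lra.
Qed.

Lemma intensity_ge_a0 xs k : a 0%nat <= intensity a xs k.
Proof.
  unfold intensity.
  enough (0 <= lsum (fun i => a (k - i)%nat * Defs.ind (xi xs i)) (seq 1 (k - 1))) by lra.
  apply lsum_ge0. intros i _. apply Rmult_le_pos; [apply a_ge0 | destruct (xi xs i); simpl; lra].
Qed.

Lemma intensity_le_Series xs k : intensity a xs k <= Series a.
Proof.
  apply Rle_trans with (a 0%nat + sum1 (fun i => a (k - i)%nat) (k - 1)).
  - apply Rplus_le_compat_l, sum1_le. intros i _. pose proof (a_ge0 (k - i)).
    destruct (xi xs i); simpl; lra.
  - destruct k as [|k].
    + pose proof (sum_n_le_Series 0). rewrite sum_n_sum1 in H. exact H.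
    + replace (S k - 1)%nat with k by lia. rewrite sum1_rev, <- sum_n_sum1. apply sum_n_le_Series.
Qed.

Lemma intensity_bounds xs k : 0 <= intensity a xs k <= 1.
Proof.
  pose proof (intensity_ge_a0 xs k). pose proof (intensity_le_Series xs k). pose proof (a_ge0 0). lra.
Qed.

Lemma dthp_pmf_ge0 xs : 0 <= dthp_pmf a xs.
Proof.
  apply fold_Rmult_map_ge0. intros k _. pose proof (intensity_bounds xs k). destruct (xi xs k); lra.
Qed.

Lemma dthp_E_le n F G : (forall xs, In xs (bool_lists n) -> F xs <= G xs) ->
  dthp_E a n F <= dthp_E a n G.
Proof. intros H. apply lsum_le. intros x Hx. apply Rmult_le_compat_l; auto using dthp_pmf_ge0. Qed.

Lemma intensity_increasing xs ys k : le_bools xs ys -> intensity a xs k <= intensity a ys k.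
Proof.
  intros H. apply Rplus_le_compat_l, lsum_le. intros i _.
  apply Rmult_le_compat_l; [apply a_ge0|]. unfold xi.
  pose proof (le_bools_nth _ _ (i - 1) H).
  destruct (nth (i - 1) xs false), (nth (i - 1) ys false); simpl in *; lra.
Qed.

Lemma cond_next_increasing n h : increasing h -> increasing (cond_next a n h).
Proof.
  intros Hh xs ys Hxy. unfold cond_next, next_intensity.
  pose proof (intensity_increasing _ _ (S n) Hxy).
  pose proof (intensity_bounds xs (S n)). pose proof (intensity_bounds ys (S n)).
  assert (h (xs ++ [true]) <= h (ys ++ [true])) by (apply Hh, le_bools_app; auto).
  assert (h (xs ++ [false]) <= h (ys ++ [false])) by (apply Hh, le_bools_app; auto).
  assert (h (ys ++ [false]) <= h (ys ++ [true])) by (apply Hh, le_bools_app; auto using le_bools_refl).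
  nra.
Qed.

(* Chebyshev's sum inequality for the two-point law of the next coordinate. *)
Lemma cond_next_mul_ge n f g xs : increasing f -> increasing g ->
  cond_next a n f xs * cond_next a n g xs <= cond_next a n (fun ys => f ys * g ys) xs.
Proof.
  intros Hf Hg. unfold cond_next, next_intensity.
  assert (f (xs ++ [false]) <= f (xs ++ [true])) by (apply Hf, le_bools_app; auto using le_bools_refl).
  assert (g (xs ++ [false]) <= g (xs ++ [true])) by (apply Hg, le_bools_app; auto using le_bools_refl).
  pose proof (intensity_bounds xs (S n)).
  set (l := intensity a xs (S n)) in *.
  assert (0 <= l * (1 - l) * ((f (xs ++ [true]) - f (xs ++ [false])) *
                              (g (xs ++ [true]) - g (xs ++ [false])))).
  { apply Rmult_le_pos; [nra | apply Rmult_le_pos; lra]. }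
  nra.
Qed.

Lemma harris_increasing n f g : increasing f -> increasing g ->
  dthp_E a n f * dthp_E a n g <= dthp_E a n (fun xs => f xs * g xs).
Proof.
  revert f g; induction n as [|n IH]; intros f g Hf Hg.
  - rewrite !dthp_E_0. lra.
  - rewrite !dthp_E_S. eapply Rle_trans.
    + apply IH; apply cond_next_increasing; assumption.
    + apply dthp_E_le. intros xs _. apply cond_next_mul_ge; assumption.
Qed.

Lemma harris_decreasing n f g :
  increasing (fun xs => - f xs) -> increasing (fun xs => - g xs) ->
  dthp_E a n f * dthp_E a n g <= dthp_E a n (fun xs => f xs * g xs).
Proof.
  intros Hf Hg. pose proof (harris_increasing n _ _ Hf Hg) as H.
  rewrite (dthp_E_ext _ _ (fun xs => - f xs * - g xs) (fun xs => f xs * g xs)) in H by (intros; ring).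
  rewrite (dthp_E_ext _ _ (fun xs => - f xs) (fun xs => -1 * f xs)),
          (dthp_E_ext _ _ (fun xs => - g xs) (fun xs => -1 * g xs)), !dthp_E_scal in H by (intros; ring).
  lra.
Qed.

(* Since [exp (t H)] and the next intensity are both increasing (t >= 0) or both
   decreasing (t < 0) in the path, they are positively correlated. *)
Lemma dthp_mgf_S_ge t n :
  dthp_mgf a t n * (1 + (exp t - 1) * arrival_prob a n) <= dthp_mgf a t (S n).
Proof.
  rewrite dthp_mgf_S, <- dthp_E_affine_intensity.
  change (dthp_mgf a t n) with (dthp_E a n (fun xs => exp (t * Hval xs))).
  destruct (Rle_or_lt 0 t) as [Ht|Ht].
  - assert (0 <= exp t - 1) by (pose proof (exp_le 0 t Ht); rewrite exp_0 in *; lra).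
    apply harris_increasing; auto; intros xs ys Hxy.
    + apply exp_le, Rmult_le_compat_l, Hval_increasing; auto.
    + pose proof (intensity_increasing xs ys (S n) Hxy). unfold next_intensity. nra.
  - assert (exp t - 1 < 0) by (pose proof (exp_increasing t 0 Ht); rewrite exp_0 in *; lra).
    apply harris_decreasing; auto; intros xs ys Hxy.
    + apply Ropp_le_contravar, exp_le. pose proof (Hval_increasing _ _ Hxy). nra.
    + pose proof (intensity_increasing xs ys (S n) Hxy). unfold next_intensity. nra.
Qed.

Lemma dthp_mgf_le_pow t B : (forall xs k, 1 + (exp t - 1) * intensity a xs k <= B) ->
  forall n, dthp_mgf a t n <= B ^ n.
Proof.
  intros HB n. induction n as [|n IH]; [rewrite dthp_mgf_0; simpl; lra|].
  rewrite dthp_mgf_S. simpl pow.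
  change (dthp_mgf a t n) with (dthp_E a n (fun xs => exp (t * Hval xs))) in IH.
  apply Rle_trans with (dthp_E a n (fun xs => B * exp (t * Hval xs))).
  - apply dthp_E_le. intros xs _. rewrite Rmult_comm. apply Rmult_le_compat_r; [| apply HB].
    left; apply exp_pos.
  - rewrite dthp_E_scal. apply Rmult_le_compat_l; [|exact IH].
    pose proof (HB [] 0%nat). pose proof (mix_exp_pos t _ (intensity_bounds [] 0)). lra.
Qed.

Lemma dthp_mgf_ge_no_arrival t n : (1 - a 0%nat) ^ n <= dthp_mgf a t n.
Proof.
  rewrite <- dthp_E_all_false. apply dthp_E_le. intros xs _.
  destruct (forallb negb xs) eqn:Hx.
  - rewrite Hval_all_false, Rmult_0_r, exp_0; auto; lra.
  - left; apply exp_pos.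
Qed.

Lemma a0_le_Series : a 0%nat <= Series a.
Proof. pose proof (sum_n_le_Series 0). rewrite sum_O in H. exact H. Qed.

Lemma sum1_le_Series_minus_a0 n : sum1 a n <= Series a - a 0%nat.
Proof. pose proof (sum_n_le_Series n). rewrite sum_n_sum1 in H. lra. Qed.

Lemma pstar_fixpoint : pstar a = a 0%nat + (Series a - a 0%nat) * pstar a.
Proof. unfold pstar. field. pose proof (a_ge0 0). lra. Qed.

Lemma pstar_bounds : 0 <= pstar a <= 1.
Proof.
  unfold pstar. pose proof (a_ge0 0). pose proof a0_le_Series.
  split; [apply Rle_mult_inv_pos; lra | apply Rle_div_l; lra].
Qed.

Lemma arrival_prob_ge0 n : 0 <= arrival_prob a n.
Proof.
  rewrite <- (dthp_E_const a n 0). apply dthp_E_le. intros xs _. apply intensity_bounds.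
Qed.

Lemma arrival_prob_le_pstar n : arrival_prob a n <= pstar a.
Proof.
  induction n as [n IH] using lt_wf_ind. rewrite arrival_prob_renewal, pstar_fixpoint at 1.
  apply Rplus_le_compat_l. apply Rle_trans with (sum1 (fun j => a j * pstar a) n).
  - apply sum1_le. intros j Hj. apply Rmult_le_compat_l; [apply a_ge0 | apply IH; lia].
  - rewrite sum1_scal_r. apply Rmult_le_compat_r; [apply pstar_bounds | apply sum1_le_Series_minus_a0].
Qed.

Lemma arrival_prob_le_S n : arrival_prob a n <= arrival_prob a (S n).
Proof.
  induction n as [n IH] using lt_wf_ind.
  rewrite (arrival_prob_renewal a n), (arrival_prob_renewal a (S n)), sum1_S.
  pose proof (Rmult_le_pos _ _ (a_ge0 (S n)) (arrival_prob_ge0 (S n - S n))).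
  enough (sum1 (fun j => a j * arrival_prob a (n - j)) n <=
          sum1 (fun j => a j * arrival_prob a (S n - j)) n) by lra.
  apply sum1_le. intros j Hj. apply Rmult_le_compat_l; [apply a_ge0|].
  replace (S n - j)%nat with (S (n - j)) by lia. apply IH. lia.
Qed.

Lemma arrival_prob_le_add n d : arrival_prob a n <= arrival_prob a (n + d).
Proof.
  induction d as [|d IH]; [rewrite Nat.add_0_r; lra|].
  rewrite Nat.add_succ_r. pose proof (arrival_prob_le_S (n + d)). lra.
Qed.

Lemma arrival_prob_renewal_ge J n :
  a 0%nat + sum1 a J * arrival_prob a n <= arrival_prob a (J + n).
Proof.
  rewrite (arrival_prob_renewal a (J + n)). apply Rplus_le_compat_l.
  apply Rle_trans with (sum1 (fun j => a j * arrival_prob a (J + n - j)) J).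
  - rewrite <- sum1_scal_r. apply sum1_le. intros j Hj. apply Rmult_le_compat_l; [apply a_ge0|].
    replace (J + n - j)%nat with (n + (J - j))%nat by lia. apply arrival_prob_le_add.
  - apply sum1_le_add. intros j. apply Rmult_le_pos; [apply a_ge0 | apply arrival_prob_ge0].
Qed.

(* The increasing limit [L] satisfies [L >= a_0 + (sum_(i>=1) a_i) L], hence [L >= p^*]. *)
Lemma arrival_prob_cvg : is_lim_seq (arrival_prob a) (pstar a).
Proof.
  destruct (ex_finite_lim_seq_incr (arrival_prob a) (pstar a) arrival_prob_le_S arrival_prob_le_pstar)
    as [L HL].
  assert (HLle : L <= pstar a).
  { apply (is_lim_seq_le _ _ _ _ arrival_prob_le_pstar HL (is_lim_seq_const _)). }
  assert (HJ : forall J, a 0%nat + sum1 a J * L <= L).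
  { intros J. apply (is_lim_seq_le (fun n => a 0%nat + sum1 a J * arrival_prob a n)
                                   (fun n => arrival_prob a (n + J)) (a 0%nat + sum1 a J * L) L).
    - intros n. rewrite Nat.add_comm. apply arrival_prob_renewal_ge.
    - apply is_lim_seq_plus', is_lim_seq_mult'; [apply is_lim_seq_const.. | exact HL].
    - apply is_lim_seq_incr_n, HL. }
  assert (Hfix : a 0%nat + (Series a - a 0%nat) * L <= L).
  { apply (is_lim_seq_le (fun J => a 0%nat + (sum_n a J - a 0%nat) * L) (fun _ => L)
                           (a 0%nat + (Series a - a 0%nat) * L) L).
    - intros J. rewrite sum_n_sum1. replace (a 0%nat + sum1 a J - a 0%nat) with (sum1 a J) by ring.
      apply HJ.
    - apply is_lim_seq_plus'; [apply is_lim_seq_const|].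
      apply is_lim_seq_mult', is_lim_seq_const.
      apply is_lim_seq_minus'; [apply Series_correct, a_summable | apply is_lim_seq_const].
    - apply is_lim_seq_const. }
  replace (pstar a) with L; [exact HL|].
  apply Rle_antisym; [exact HLle|]. unfold pstar. apply Rle_div_l; [|lra].
  pose proof (a_ge0 0). lra.
Qed.

Lemma growth_ge_pstar t (G : R) : is_lim_seq (fun n => / INR n * ln (dthp_mgf a t n)) G ->
  ln (1 + (exp t - 1) * pstar a) <= G.
Proof.
  apply (ln_le_growth_of_ratio _ (fun n => 1 + (exp t - 1) * arrival_prob a n)).
  - apply dthp_mgf_0.
  - intros n. apply mix_exp_pos. pose proof (arrival_prob_le_pstar n).
    pose proof (arrival_prob_ge0 n). pose proof pstar_bounds. lra.
  - apply dthp_mgf_S_ge.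
  - apply mix_exp_pos, pstar_bounds.
  - apply is_lim_seq_plus', is_lim_seq_mult'; [apply is_lim_seq_const.. | apply arrival_prob_cvg].
Qed.

Lemma a0_lt_1 : a 0%nat < 1.
Proof. pose proof a0_le_Series. lra. Qed.

Lemma growth_ge_no_arrival t (G : R) : is_lim_seq (fun n => / INR n * ln (dthp_mgf a t n)) G ->
  ln (1 - a 0%nat) <= G.
Proof.
  apply ln_le_growth_of_pow_le; [pose proof a0_lt_1; lra | apply dthp_mgf_ge_no_arrival].
Qed.

Lemma growth_le_of_intensity_bound t (B G : R) :
  (forall xs k, 1 + (exp t - 1) * intensity a xs k <= B) ->
  is_lim_seq (fun n => / INR n * ln (dthp_mgf a t n)) G -> G <= ln B.
Proof.
  intros HB. apply growth_le_ln_of_le_pow; [| | apply dthp_mgf_le_pow, HB].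
  - pose proof (HB [] 0%nat). pose proof (mix_exp_pos t _ (intensity_bounds [] 0)). lra.
  - intros n. eapply Rlt_le_trans; [| apply (dthp_mgf_ge_no_arrival t n)].
    apply pow_lt. pose proof a0_lt_1. lra.
Qed.

End Kernel.

Theorem theorem4p9 (a : nat -> R)
  (Hpos : forall i, 0 < a i)
  (Hex : ex_series a)
  (Hlt1 : Series a < 1)
  (Hmean : ex_series (fun i => INR i * a i))
  (Gamma : R -> R)
  (HGamma : forall t,
     is_lim_seq (fun n => / INR n * ln (dthp_mgf a t n)) (Gamma t)) :
  (forall t, 0 <= t ->
     ln (1 + (exp t - 1) * pstar a) <= Gamma t
     <= ln (1 + (exp t - 1) * Series a)) /\
  (forall t, t < 0 ->
     Rmax (ln (1 + (exp t - 1) * pstar a)) (ln (1 - a 0%nat)) <= Gamma t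
     <= ln (1 + (exp t - 1) * a 0%nat)).
Proof.
  assert (Hge0 : forall i, 0 <= a i) by (intros i; left; apply Hpos).
  split; intros t Ht; split.
  - exact (growth_ge_pstar a Hge0 Hex Hlt1 t _ (HGamma t)).
  - apply (growth_le_of_intensity_bound a Hge0 Hex Hlt1 t); [|apply HGamma].
    intros xs k. pose proof (intensity_le_Series a Hge0 Hex xs k).
    pose proof (exp_le 0 t Ht). rewrite exp_0 in *. nra.
  - apply Rmax_lub.
    + exact (growth_ge_pstar a Hge0 Hex Hlt1 t _ (HGamma t)).
    + exact (growth_ge_no_arrival a Hge0 Hex Hlt1 t _ (HGamma t)).
  - apply (growth_le_of_intensity_bound a Hge0 Hex Hlt1 t); [|apply HGamma].
    intros xs k. pose proof (intensity_ge_a0 a Hge0 xs k).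
    pose proof (exp_increasing t 0 Ht). rewrite exp_0 in *. nra.
Qed.
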